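(* Let $(S,\lambda_S^\bullet,\mu_S^{(0)})$, $(G,\lambda_G^\bullet,\mu_G^{(0)})$, $(T,\lambda_T^\bullet,\mu_T^{(0)})$ be Haar groupoids, $p:S\to G$, $q:T\to G$ homomorphisms of Haar groupoids with weak pullback $P$. Let $\gamma_p^\bullet$ be a locally finite Borel system of measures on $p|_{S^{(0)}}:S^{(0)}\to G^{(0)}$ which is a disintegration of $\mu_S^{(0)}$ with respect to $\mu_G^{(0)}$, and $\gamma_q^\bullet$ a locally finite Borel system of measures on $q|_{T^{(0)}}:T^{(0)}\to G^{(0)}$ which is a disintegration of $\mu_T^{(0)}$ with respect to $\mu_G^{(0)}$. Then the projection $\pi_G:P^{(0)}\to G$, $(s,g,t)\mapsto g$, admits a locally finite Borel system of measures $\eta^\bullet$ given by $\eta^x=\gamma_p^{r_G(x)}\times\delta_x\times\gamma_q^{d_G(x)}$ for $x\in G$.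
   Context: A system of measures on a Borel map $\pi:X\to Y$ is a family $\{\lambda^y\}_{y\in Y}$ of positive Borel measures on $X$ with each $\lambda^y$ concentrated on $\pi^{-1}(y)$; it is a Borel system of measures (BSM) if $y\mapsto\lambda^y(E)$ is Borel for each Borel $E\subseteq X$; it is locally finite if every $x\in X$ has a neighborhood $U$ with $\lambda^y(U)<\infty$ for all $y$. A BSM $\gamma^\bullet$ on $f:X\to Y$ is a disintegration of a measure $\mu$ on $X$ with respect to a measure $\nu$ on $Y$ if $\mu(E)=\int_Y\gamma^y(E)\,d\nu(y)$ for all Borel $E$. For a groupoid, $G^{(0)}$ is the unit space, $r,d$ range/source, $G^u=r^{-1}(u)$. A Haar groupoid $(G,\lambda^\bullet,\mu^{(0)})$ is a second countable, locally compact, Hausdorff topological groupoid with a continuous left Haar system $\lambda^\bullet$ (a system of measures on $r$ that is continuous in the sense that $u\mapsto\int f d\lambda^u$ is continuous for continuous compactly supported $f\ge0$, left invariant $\lambda^{d(x)}(E)=\lambda^{r(x)}(x(E\cap G^{d(x)}))$, and positive on open sets meeting $G^u$) and a non-zero Radon measure $\mu^{(0)}$ on $G^{(0)}$ quasi-invariant in the sense that the induced measure $\mu(E)=\int\lambda^u(E)d\mu^{(0)}(u)$ is equivalent to $E\mapsto\mu(E^{-1})$. A homomorphism of Haar groupoids is a continuous groupoid homomorphism preserving the measure class of induced measures. The weak pullback has unit space $P^{(0)}=\{(s,g,t)\in S^{(0)}\times G\times T^{(0)}: r_G(g)=p(s),\ d_G(g)=q(t)\}$ with the subspace topology; $\eta^x$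 is a measure on $S^{(0)}\times G\times T^{(0)}$ concentrated on $P^{(0)}$, regarded as a measure on $P^{(0)}$. *)

From HB Require Import structures.
From mathcomp Require Import all_boot all_order all_algebra.
From mathcomp Require Import all_classical all_reals all_analysis.
From mathcomp Require Import measurable_realfun lebesgue_integral.
Set Implicit Arguments. Unset Strict Implicit. Unset Printing Implicit Defensive.
Import Order.TTheory GRing.Theory Num.Theory.
Import numFieldNormedType.Exports.
Local Open Scope classical_set_scope.
Local Open Scope ring_scope.

(* products of pointed topological spaces are pointed topological spaces *)
HB.saturate prod.

Definition BorelT (T : ptopologicalType) := g_sigma_algebraType (@open T).

(* Groupoids (unit space G0 as a subset of G, range r, source d,            *)
(* multiplication mul defined on composable pairs (d x = r y), inverse inv) *)
Definition is_groupoid (G : Type) (G0 : set G) (r d : G -> G)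
    (mul : G -> G -> G) (inv : G -> G) : Prop :=
  [/\ (forall x, G0 (r x) /\ G0 (d x)),
      (forall u, G0 u -> r u = u /\ d u = u),
      (forall x y, d x = r y -> r (mul x y) = r x /\ d (mul x y) = d y),
      (forall x y z, d x = r y -> d y = r z -> mul (mul x y) z = mul x (mul y z)) &
      (forall x, mul (r x) x = x /\ mul x (d x) = x)] /\
      (forall x, [/\ r (inv x) = d x, d (inv x) = r x,
                     mul x (inv x) = r x & mul (inv x) x = d x]).

Definition is_lcsc_topological_groupoid (G : ptopologicalType) (G0 : set G)
    (r d : G -> G) (mul : G -> G -> G) (inv : G -> G) : Prop :=
  is_groupoid G0 r d mul inv /\
  [/\ {within [set xy : G * G | d xy.1 = r xy.2], continuous (fun xy => mul xy.1 xy.2)},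
      continuous inv,
      @second_countable G,
      locally_compact [set: G] &
      hausdorff_space G].

Section HaarDefs.
Context {R : realType}.
Local Open Scope ereal_scope.

Definition is_haar_system (G : ptopologicalType) (G0 : set G) (r d : G -> G)
    (mul : G -> G -> G) (lam : G -> {measure set (BorelT G) -> \bar R}) : Prop :=
  [/\
      (forall u, G0 u -> lam u (~` (r @^-1` [set u])) = 0),
      (forall f : G -> R, continuous f -> compact (closure [set x | f x != 0%R]) ->
         (forall x, (0 <= f x)%R) ->
         (forall u, G0 u -> \int[lam u]_x (f x)%:E \is a fin_num) /\
         {within G0, continuous (fun u => fine (\int[lam u]_x (f x)%:E))}),
      (forall x (E : set (BorelT G)), measurable E ->
         lam (d x) E = lam (r x) (mul x @` (E `&` (r @^-1` [set d x])))) &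
      (forall u, G0 u -> forall U : set G, open U ->
         U `&` (r @^-1` [set u]) !=set0 -> 0 < lam u U)].

(* Radon measure on the subspace X0 (extended by zero outside X0) *)
Definition is_radon_on (X : ptopologicalType) (X0 : set X)
    (mu : {measure set (BorelT X) -> \bar R}) : Prop :=
  [/\ mu (~` X0) = 0,
      (forall K : set X, compact K -> K `<=` X0 -> mu K < +oo),
      (forall E : set (BorelT X), measurable E -> E `<=` X0 ->
         mu E = ereal_inf [set mu U | U in [set U : set X | open U /\ E `<=` U]]) &
      (forall U : set X, open U ->
         mu U = ereal_sup [set mu K | K in [set K : set X | compact K /\ K `<=` U `&` X0]])].

Definition induced_measure (G : ptopologicalType) (G0 : set G)
    (lam : G -> {measure set (BorelT G) -> \bar R})
    (mu0 : {measure set (BorelT G) -> \bar R}) (E : set G) : \bar R :=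
  \int[mu0]_(u in (G0 : set (BorelT G))) lam u E.

End HaarDefs.

Record HaarGroupoid (R : realType) (G : ptopologicalType) := {
  g0 : set G;
  rng : G -> G;
  src : G -> G;
  gmul : G -> G -> G;
  ginv : G -> G;
  hlam : G -> {measure set (BorelT G) -> \bar R};
  hmu0 : {measure set (BorelT G) -> \bar R};
  hg_groupoid : is_lcsc_topological_groupoid g0 rng src gmul ginv;
  hg_haar : is_haar_system g0 rng src gmul hlam;
  hg_mu0_radon : is_radon_on g0 hmu0;
  hg_mu0_nonzero : hmu0 setT <> 0%E;
  hg_quasi_invariant : forall E : set (BorelT G), measurable E ->
      (induced_measure g0 hlam hmu0 E = 0%E <->
       induced_measure g0 hlam hmu0 (ginv @` E) = 0%E) }.

Definition is_haar_hom (R : realType) (S G : ptopologicalType)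
    (HS : HaarGroupoid R S) (HG : HaarGroupoid R G) (p : S -> G) : Prop :=
  [/\ continuous p,
      (forall x y, src HS x = rng HS y ->
         src HG (p x) = rng HG (p y) /\ p (gmul HS x y) = gmul HG (p x) (p y)) &
      (forall E : set (BorelT G), measurable E ->
         (induced_measure (g0 HG) (hlam HG) (hmu0 HG) E = 0%E <->
          induced_measure (g0 HS) (hlam HS) (hmu0 HS) (p @^-1` E) = 0%E))].

Section BSM.
Context {R : realType} {X Y : ptopologicalType}.
Local Open Scope ereal_scope.

Definition locally_finite_BSM (X0 : set X) (pi : X -> Y) (Y0 : set Y)
    (lam : Y -> set X -> \bar R) : Prop :=
  [/\
      (forall y, Y0 y -> exists m : {measure set (BorelT X) -> \bar R},
          forall E : set (BorelT X), measurable E -> m E = lam y E),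
      (forall y, Y0 y -> lam y (~` (X0 `&` pi @^-1` [set y])) = 0),
      (forall E : set (BorelT X), measurable E -> E `<=` X0 ->
         measurable_fun (Y0 : set (BorelT Y)) (fun y : BorelT Y => lam y E)) &
      (forall x, X0 x -> exists U : set X,
          [/\ open U, U x & forall y, Y0 y -> lam y U < +oo])].

Definition is_disintegration (X0 : set X) (Y0 : set Y) (gam : Y -> set X -> \bar R)
    (mu : {measure set (BorelT X) -> \bar R}) (nu : {measure set (BorelT Y) -> \bar R}) : Prop :=
  forall E : set (BorelT X), measurable E -> E `<=` X0 ->
    mu E = \int[nu]_(y in (Y0 : set (BorelT Y))) gam y E.

End BSM.

Definition pullback_units (R : realType) (S G T : ptopologicalType)
    (HS : HaarGroupoid R S) (HG : HaarGroupoid R G) (HT : HaarGroupoid R T)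
    (p : S -> G) (q : T -> G) : set (S * G * T) :=
  [set z | [/\ g0 HS z.1.1, g0 HT z.2, rng HG z.1.2 = p z.1.1 & src HG z.1.2 = q z.2]].

(* eta^x = gamma_p^{r(x)} x delta_x x gamma_q^{d(x)}, the product measure
   (defined, as mathcomp's product_measure1, by iterated integration) *)
Definition eta_measure (R : realType) (S G T : ptopologicalType) (HG : HaarGroupoid R G)
    (gp : G -> {measure set (BorelT S) -> \bar R})
    (gq : G -> {measure set (BorelT T) -> \bar R})
    (x : G) (E : set (S * G * T)) : \bar R :=
  \int[gp (rng HG x)]_s
     \int[gq (src HG x)]_t (\1_E ((s, x, t) : S * G * T))%:E.

From HB Require Import structures.
From mathcomp Require Import all_boot all_order all_algebra.
From mathcomp Require Import all_classical all_reals all_analysis.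
From mathcomp Require Import measurable_realfun lebesgue_integral.
Import Order.TTheory GRing.Theory Num.Theory.
Import numFieldNormedType.Exports.
Local Open Scope classical_set_scope.
Local Open Scope ring_scope.
Local Open Scope ereal_scope.

(* eta^x is the product gamma_p^(r x) x delta_x x gamma_q^(d x), defined by
   iterated integration.  It is concentrated on the fibre of pi_G over x because
   the two outer factors live on the fibres of p and q, and it is finite on
   U x G x V whenever U and V are neighbourhoods on which gamma_p and gamma_q
   are finite.  The substance is measurability: a locally finite system of
   measures on a second countable space admits one countable Borel cover of
   uniformly finite measure, so it integrates jointly measurable functions
   measurably (the kernel version of Tonelli's theorem), and on a product of
   second countable spaces the Borel sigma-algebra is the product one.  This
   gives both the sigma-additivity of each eta^x (exchange of integral and
   series) and the Borel measurability of x |-> eta^x(E). *)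

Lemma open_setX (X Y : topologicalType) (A : set X) (B : set Y) :
  open A -> open B -> open (A `*` B).
Proof.
move=> oA oB; rewrite openE => -[x y] [/= Ax By].
by exists (A, B) => //=; split; exact: open_nbhs_nbhs.
Qed.

Lemma closed_eq_fun (X Y : topologicalType) (f g : X -> Y) :
  hausdorff_space Y -> continuous f -> continuous g -> closed [set x | f x = g x].
Proof.
move=> hY cf cg x clx; apply: hY => A B nA nB.
have nAB : nbhs x (f @^-1` A `&` g @^-1` B) by apply: filterI; [exact: cf|exact: cg].
have [z [fgz [Afz Bgz]]] := clx _ nAB.
by exists (f z); split => //; rewrite fgz.
Qed.

Definition nbhs_basis {X : topologicalType} {I : Type} (e : I -> set X) :=
  forall x A, nbhs x A -> exists2 i, e i x & e i `<=` A.

Lemma second_countable_nat_basis (X : topologicalType) : @second_countable X ->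
  exists e : nat -> set X, (forall n, open (e n)) /\ nbhs_basis e.
Proof.
move=> [B /countable_injP [f finj] [Bopen Bnbhs]].
pose e n := \bigcup_(b in [set b | B b /\ f b = n]) b.
exists e; split => [n|x A nA].
  by apply: bigcup_open => b [Bb _]; exact: Bopen.
have [U [BU Ux] UA] := Bnbhs x A nA.
have eU : e (f U) = U.
  apply/seteqP; split => [z [b [Bb fbU] bz]|z Uz]; last by exists U.
  by rewrite -(finj b U) // inE.
by exists (f U); rewrite eU.
Qed.

Lemma nbhs_basis_setX {X Y : topologicalType} {I J : Type}
    {eX : I -> set X} {eY : J -> set Y} :
  nbhs_basis eX -> nbhs_basis eY ->
  nbhs_basis (fun ij : I * J => eX ij.1 `*` eY ij.2).
Proof.
move=> bX bY [x y] W [[A B] /= [nA nB] ABW].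
have [i Xi iA] := bX x A nA; have [j Yj jB] := bY y B nB.
by exists (i, j) => // z [/iA ? /jB ?]; exact: ABW.
Qed.

Lemma open_Borel_measurable (X : ptopologicalType) (A : set X) :
  open A -> measurable (A : set (BorelT X)).
Proof. exact: sub_sigma_algebra. Qed.

Lemma closed_Borel_measurable (X : ptopologicalType) (A : set X) :
  closed A -> measurable (A : set (BorelT X)).
Proof.
move=> cA; rewrite -[A]setCK; apply: measurableC.
by apply: open_Borel_measurable; exact: closed_openC.
Qed.

Lemma continuous_Borel_measurable {X Y : ptopologicalType} (f : X -> Y) :
  continuous f -> measurable_fun setT (f : BorelT X -> BorelT Y).
Proof.
move=> cf; apply: (@measurability _ _ (BorelT X) (BorelT Y) _ _ (@open Y)) => //.
move=> _ [B oB <-].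
rewrite setTI; apply: open_Borel_measurable.
by move: oB; apply: (proj1 (continuousP f)).
Qed.

Lemma measurable_fun_nbhs_basis {X : ptopologicalType} {I : countType}
    {e : I -> set X} {d} {Z : measurableType d} {h : Z -> X} :
  nbhs_basis e -> (forall i, measurable (h @^-1` e i)) ->
  measurable_fun setT (h : Z -> BorelT X).
Proof.
move=> be mhe; apply: (@measurability _ _ Z (BorelT X) _ _ (@open X)) => //.
move=> _ [U oU <-].
have -> : U = \bigcup_(i in [set i | e i `<=` U]) e i.
  apply/seteqP; split => [x Ux|x [i iU /iU] //].
  have [i ei iU] := be x U (open_nbhs_nbhs (conj oU Ux)).
  by exists i.
rewrite setTI preimage_bigcup bigcup_mkcond.
by apply: countable_bigcupT_measurable => // i; case: ifP.
Qed.

Section topological_groupoid.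
Context (G : ptopologicalType) (G0 : set G) (r d : G -> G) (mul : G -> G -> G)
  (inv : G -> G).
Hypothesis hG : is_lcsc_topological_groupoid G0 r d mul inv.

(* r x = x x^-1, so r is multiplication composed with the continuous
   map x |-> (x, x^-1) into the composable pairs. *)
Lemma groupoid_range_continuous : continuous r.
Proof.
move: hG => [[_ hinv] [hmul cinv _ _ _]] x.
have rE : r = (fun y => (fun yz => mul yz.1 yz.2) (y, inv y)).
  by apply/funext => y /=; have [_ _ -> _] := hinv y.
rewrite rE.
have composable : [set yz : G * G | d yz.1 = r yz.2] (x, inv x).
  by rewrite /=; have [-> _ _ _] := hinv x.
have := proj1 (subspace_continuousP _ _) hmul _ composable.
apply: cvg_trans => Q nQ.
have pair_cvg : (fun y => (y, inv y)) @ nbhs x --> (x, inv x).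
  by apply: cvg_pair; [exact: cvg_id|exact: cinv].
have nearQ : nbhs x [set y | d y = r (inv y) -> Q (mul y (inv y))] := pair_cvg _ nQ.
apply: filterS nearQ => y /= Qy; apply: Qy.
by have [-> _ _ _] := hinv y.
Qed.

Lemma groupoid_source_continuous : continuous d.
Proof.
move: (hG) => [[_ hinv] [_ cinv _ _ _]] x.
have -> : d = r \o inv by apply/funext => y /=; have [-> _ _ _] := hinv y.
by apply: continuous_comp; [exact: cinv|exact: groupoid_range_continuous].
Qed.

Lemma groupoid_units_closed : closed G0.
Proof.
move: hG => [[[runit unitr _ _ _] _] [_ _ _ _ hausG]].
have -> : G0 = [set x | r x = x].
  by apply/seteqP; split => [u /unitr [] //|x /= <-]; exact: (runit x).1.
apply: (@closed_eq_fun _ _ r id) => // [|x]; [exact: groupoid_range_continuous|exact: cvg_id].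
Qed.

End topological_groupoid.

Section haar_groupoid.
Context {R : realType} {X : ptopologicalType} (H : HaarGroupoid R X).

Lemma haar_second_countable : @second_countable X.
Proof. by case: (hg_groupoid H) => _ []. Qed.

Lemma haar_hausdorff : hausdorff_space X.
Proof. by case: (hg_groupoid H) => _ []. Qed.

Lemma haar_rng_continuous : continuous (rng H).
Proof. exact: groupoid_range_continuous (hg_groupoid H). Qed.

Lemma haar_src_continuous : continuous (src H).
Proof. exact: groupoid_source_continuous (hg_groupoid H). Qed.

Lemma haar_units_measurable : measurable (g0 H : set (BorelT X)).
Proof. apply: closed_Borel_measurable; exact: groupoid_units_closed (hg_groupoid H). Qed.

Lemma haar_rng_unit x : g0 H (rng H x).
Proof. by case: (hg_groupoid H) => -[[/(_ x) []]]. Qed.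

Lemma haar_src_unit x : g0 H (src H x).
Proof. by case: (hg_groupoid H) => -[[/(_ x) []]]. Qed.

End haar_groupoid.

Lemma haar_fiber_measurable {R : realType} {X Y : ptopologicalType}
    (HX : HaarGroupoid R X) (HY : HaarGroupoid R Y) {p : X -> Y} :
  continuous p -> forall y, measurable ((g0 HX `&` p @^-1` [set y]) : set (BorelT X)).
Proof.
move=> cp y; apply: measurableI; first exact: haar_units_measurable HX.
apply: closed_Borel_measurable; apply: preimage_closed; first by move=> z _; apply: cp.
by apply: accessible_closed_set1; apply: hausdorff_accessible; exact: haar_hausdorff HY.
Qed.

Section integral_sigma_finite_family.
Context {d d'} {X : measurableType d} {Y : measurableType d'} {R : realType}
  {l : X -> {measure set Y -> \bar R} }
  (ml : forall U, measurable U -> measurable_fun setT (l ^~ U))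
  {F : nat -> set Y} (mF : forall n, measurable (F n)) (Fcover : \bigcup_n F n = setT)
  (Ffin : forall x n, l x (F n) < +oo).

Let kl := l.
HB.instance Definition _ := isKernel.Build _ _ X Y R kl ml.

(* On each piece of the disjointified cover [seqDU F] every [l x] is finite,
   which is what the library's xsection argument for kernels needs. *)
Lemma measurable_fun_xsection_family (A : set (X * Y)) : measurable A ->
  measurable_fun setT (fun x => l x (xsection A x)).
Proof.
move=> mA; have mD := seqDU_measurable mF.
have -> : (fun x => l x (xsection A x)) =
    (fun x => \sum_(n <oo | n \in setT) l x (xsection A x `&` seqDU F n)).
  apply/funext => x; rewrite -measure_bigcup //; last first.
  - move=> i j _ _ [z [[_ zi] [_ zj]]]; apply: (trivIset_seqDU F) => //.
    by exists z.
  - by move=> n _; apply: measurableI => //; exact: measurable_xsection.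
  by rewrite -setI_bigcupr -seqDU_bigcup_eq Fcover setIT.
apply: ge0_emeasurable_sum => // n _.
have := @measurable_prod_subset_xsection_kernel _ _ X Y R kl (seqDU F n) (mD n).
move=> /(_ _ A mA) [] // x.
have DnF : l x (seqDU F n) \is a fin_num.
  rewrite ge0_fin_numE //; apply: le_lt_trans (Ffin x n).
  by apply: le_measure; rewrite ?inE //; exact: subDsetl.
exists (fine (l x (seqDU F n)) + 1)%R => B mB.
rewrite /mrestr /= EFinD fineK //.
apply: (le_lt_trans (y := l x (seqDU F n))); last by rewrite lteDl // lte01.
by apply: le_measure; rewrite ?inE //; exact: measurableI.
Qed.

Import HBNNSimple.

Lemma measurable_fun_integral_family (k : X * Y -> \bar R) :
  (forall z, 0 <= k z) -> measurable_fun setT k ->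
  measurable_fun setT (fun x => \int[l x]_y k (x, y)).
Proof.
move=> k0 mk; pose k_ := nnsfun_approx measurableT mk.
apply: (@measurable_fun_xsection_integral _ _ X Y R k l k_).
- by move=> a b ab; exact/nd_nnsfun_approx.
- by move=> z; apply: cvg_nnsfun_approx => // ? ?; exact: k0.
- move=> n r; apply: measurable_fun_xsection_family.
  have mk_ : measurable_fun setT (k_ n) by [].
  by have := mk_ measurableT [set r] (measurable_set1 r); rewrite setTI.
Qed.

End integral_sigma_finite_family.

Section locally_finite_BSM_theory.
Context {R : realType} {X Y : ptopologicalType} {X0 : set X} {f : X -> Y}
  {Y0 : set Y} {lam : Y -> {measure set (BorelT X) -> \bar R} }.
Hypotheses (mX0 : measurable (X0 : set (BorelT X)))
  (mfiber : forall y, Y0 y -> measurable ((X0 `&` f @^-1` [set y]) : set (BorelT X)))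
  (hlam : locally_finite_BSM X0 f Y0 (fun y => lam y)).

(* ~` X0 is null for every lam y, and X0 is covered by basic opens of finite
   measure. *)
Lemma locally_finite_BSM_cover : @second_countable X ->
  exists F : nat -> set X, [/\ (forall n, measurable (F n : set (BorelT X))),
    \bigcup_n F n = setT & forall y n, Y0 y -> lam y (F n) < +oo].
Proof.
move=> /second_countable_nat_basis [e [eopen ebasis]].
case: hlam => _ conc _ locfin.
pose good n := exists U, [/\ open U, e n `<=` U & forall y, Y0 y -> lam y U < +oo].
pose F n := if n is n'.+1 then (if `[< good n' >] then e n' else set0) else ~` X0.
exists F; split.
- case => [|n] /=; first exact: measurableC.
  by case: ifP => _ //; exact: open_Borel_measurable.
- apply/seteqP; split => // x _.
  have [X0x|nX0x] := pselect (X0 x); last by exists 0%N.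
  have [U [oU Ux finU]] := locfin x X0x.
  have [n enx enU] := ebasis x U (open_nbhs_nbhs (conj oU Ux)).
  by exists n.+1 => //=; rewrite asboolT //; exists U.
- move=> y [|n] Y0y /=.
    apply: (@le_lt_trans _ _ (lam y (~` (X0 `&` f @^-1` [set y])))); last by rewrite conc.
    apply: le_measure; rewrite ?inE //; [exact: measurableC|apply: measurableC; exact: mfiber|].
    by apply: subsetC => ? [].
  case: asboolP => [[U [oU enU finU]]|_]; last by rewrite measure0.
  apply: le_lt_trans (finU y Y0y).
  by apply: le_measure; rewrite ?inE //; exact: open_Borel_measurable.
Qed.

Lemma locally_finite_BSM_setI y (U : set (BorelT X)) : Y0 y -> measurable U ->
  lam y U = lam y (U `&` X0).
Proof.
move=> Y0y mU; case: hlam => _ conc _ _.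
rewrite (measureDI (lam y) mU mX0) [X in X + _](_ : _ = 0) ?add0e //.
apply/eqP; rewrite -measure_le0 -(conc y Y0y).
apply: le_measure; rewrite ?inE //; [exact: measurableD|apply: measurableC; exact: mfiber|].
by move=> x [_ nX0x] [].
Qed.

Lemma measurable_fun_locally_finite_BSM_comp {dz} {Z : measurableType dz} {h : Z -> Y} :
  measurable (Y0 : set (BorelT Y)) -> measurable_fun setT (h : Z -> BorelT Y) ->
  (forall z, Y0 (h z)) ->
  forall U : set (BorelT X), measurable U -> measurable_fun setT (fun z => lam (h z) U).
Proof.
move=> mY0 mh hY0 U mU.
have -> : (fun z => lam (h z) U) = (fun y : BorelT Y => lam y (U `&` X0)) \o h.
  by apply/funext => z /=; exact: locally_finite_BSM_setI.
apply: (measurable_comp mY0) => //; first by move=> _ [z _ <-].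
case: hlam => _ _ mlam _; apply: mlam; [exact: measurableI|exact: subIsetr].
Qed.

End locally_finite_BSM_theory.

Lemma indic_iff {R : realType} {X Y : Type} (A : set X) (B : set Y) x y :
  (A x <-> B y) -> \1_A x = \1_B y :> R.
Proof.
move=> AB; rewrite !indicE.
by have -> : (x \in A) = (y \in B) by apply/idP/idP => /set_mem /AB /mem_set.
Qed.

Section prod_dirac.
Context {R : realType} {S G T : ptopologicalType}
  (mu : {measure set (BorelT S) -> \bar R}) (nu : {measure set (BorelT T) -> \bar R})
  (y : G).

Definition prod_dirac (E : set (BorelT (S * G * T)%type)) : \bar R :=
  \int[mu]_s \int[nu]_t (\1_E ((s, y, t) : (S * G * T)%type))%:E.

Lemma measurable_prod_dirac_slice s (E : set (BorelT (S * G * T)%type)) : measurable E ->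
  measurable ((fun t => (s, y, t)) @^-1` E : set (BorelT T)).
Proof.
move=> mE; have cst_st : continuous (fun t : T => ((s, y, t) : (S * G * T)%type)).
  move=> t; apply: (@cvg_pair _ _ _ (nbhs t) (nbhs (s, y)) (nbhs t)).
  - exact: cvg_cst.
  - exact: cvg_id.
by have := continuous_Borel_measurable _ cst_st measurableT _ mE; rewrite setTI.
Qed.

Lemma prod_dirac_inner s (E : set (BorelT (S * G * T)%type)) : measurable E ->
  \int[nu]_t (\1_E ((s, y, t) : (S * G * T)%type))%:E = nu ((fun t => (s, y, t)) @^-1` E).
Proof.
move=> mE; have := integral_indic nu measurableT (measurable_prod_dirac_slice s _ mE).
rewrite setIT => <-.
by apply: eq_integral => t _; rewrite !indicE.
Qed.

Lemma prod_dirac_setX (B : set S) (D : set G) (C : set T) :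
  measurable (B : set (BorelT S)) -> measurable (C : set (BorelT T)) ->
  prod_dirac ((B `*` D) `*` C) = mu B * ((\1_D y)%:E * nu C).
Proof.
move=> mB mC; rewrite /prod_dirac.
have indicX s t : \1_((B `*` D) `*` C) ((s, y, t) : (S * G * T)%type) =
    (\1_B s * \1_D y * \1_C t)%R :> R.
  by rewrite !indicE !in_setX /=; do 3 case: (_ \in _); rewrite ?mul1r ?mul0r ?mulr0.
transitivity (\int[mu]_s ((\1_B s)%:E * ((\1_D y)%:E * nu C))); last first.
  by rewrite ge0_integralZr // ?integral_indic ?setIT //; exact/measurable_EFinP/measurable_indic.
apply: eq_integral => s _.
under eq_integral => t _ do rewrite indicX EFinM.
rewrite ge0_integralZl //; last exact/measurable_EFinP/measurable_indic.
by rewrite integral_indic // setIT EFinM muleA.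
Qed.

Lemma prod_dirac_not_setX (B : set S) (C : set T) (E : set (BorelT (S * G * T)%type)) :
  measurable (B : set (BorelT S)) -> measurable (C : set (BorelT T)) ->
  mu (~` B) = 0 -> nu (~` C) = 0 ->
  (forall s t, E (s, y, t) <-> ~ (B s /\ C t)) -> prod_dirac E = 0.
Proof.
move=> mB mC muB0 nuC0 Ey; rewrite /prod_dirac.
transitivity (\int[mu]_s ((\1_(~` B) s)%:E * nu setT)); last first.
  rewrite ge0_integralZr // ?integral_indic ?setIT ?muB0 ?mul0e //.
  - exact: measurableC.
  - by apply/measurable_EFinP/measurable_indic; exact: measurableC.
apply: eq_integral => s _; have [Bs|nBs] := pselect (B s).
- rewrite indicE memNset ?mul0e // -nuC0 -[X in nu X]setIT -integral_indic //.
    apply: eq_integral => t _; congr (_%:E); apply: indic_iff.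
    apply: iff_trans (Ey s t) _; split => [nBC Ct|nCt [_ Ct]]; [exact: nBC|exact: nCt].
  exact: measurableC.
- rewrite indicE mem_set // mul1e -[X in nu X]setIT -integral_indic //.
  apply: eq_integral => t _; congr (_%:E); apply: indic_iff.
  by apply: iff_trans (Ey s t) _; split => // _ [].
Qed.

Hypothesis measurable_slice_integral : forall E : set (BorelT (S * G * T)%type),
  measurable E -> measurable_fun (setT : set (BorelT S))
    (fun s => \int[nu]_t (\1_E ((s, y, t) : (S * G * T)%type))%:E).

Let prod_dirac0 : prod_dirac set0 = 0.
Proof.
rewrite /prod_dirac integral0_eq // => s _.
by rewrite integral0_eq // => t _; rewrite indicE in_set0.
Qed.

Let prod_dirac_ge0 (E : set (BorelT (S * G * T)%type)) : 0 <= prod_dirac E.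
Proof. by apply: integral_ge0 => s _; apply: integral_ge0 => t _; rewrite lee_fin. Qed.

Let prod_dirac_sigma_additive : semi_sigma_additive prod_dirac.
Proof.
move=> F mF tF mUF.
rewrite [X in _ --> X](_ : _ = \sum_(n <oo) prod_dirac (F n)).
  by apply/cvg_closeP; split; [exact: is_cvg_nneseries|rewrite closeE].
rewrite /prod_dirac -integral_nneseries //; first last.
- by move=> n s _; apply: integral_ge0 => t _; rewrite lee_fin.
- by move=> n; exact: measurable_slice_integral.
apply: eq_integral => s _; rewrite prod_dirac_inner //.
under eq_eseriesr do rewrite prod_dirac_inner //.
apply/esym/cvg_lim => //=; rewrite preimage_bigcup.
apply: measure_sigma_additive => [n|i j _ _ [t [Fi Fj]]].
  exact: measurable_prod_dirac_slice.
by apply: tF => //; exists (s, y, t).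
Qed.

HB.instance Definition _ := isMeasure.Build _ _ _ prod_dirac
  prod_dirac0 prod_dirac_ge0 prod_dirac_sigma_additive.

Lemma prod_dirac_is_measure : exists m : {measure set (BorelT (S * G * T)%type) -> \bar R},
  forall E, measurable E -> m E = prod_dirac E.
Proof. by exists prod_dirac. Qed.

End prod_dirac.

Lemma eta_measure_prod_dirac {R : realType} {S G T : ptopologicalType}
    (HG : HaarGroupoid R G) (gp : G -> {measure set (BorelT S) -> \bar R})
    (gq : G -> {measure set (BorelT T) -> \bar R}) y :
  eta_measure HG gp gq y = prod_dirac (gp (rng HG y)) (gq (src HG y)) y.
Proof. by []. Qed.

Lemma measurable_fun_swap12_Borel (X1 X2 X3 : ptopologicalType) :
  @second_countable X1 -> @second_countable X2 -> @second_countable X3 ->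
  measurable_fun setT (fun z : (BorelT X2 * BorelT X1 * BorelT X3)%type =>
    ((z.1.2, z.1.1, z.2) : (X1 * X2 * X3)%type) : BorelT (X1 * X2 * X3)%type).
Proof.
move=> /second_countable_nat_basis [eA [oA bA]] /second_countable_nat_basis [eB [oB bB]].
move=> /second_countable_nat_basis [eC [oC bC]].
apply: (measurable_fun_nbhs_basis (nbhs_basis_setX (nbhs_basis_setX bA bB) bC)).
move=> [[i j] k] /=.
have -> : (fun z : (BorelT X2 * BorelT X1 * BorelT X3)%type =>
    ((z.1.2, z.1.1, z.2) : (X1 * X2 * X3)%type)) @^-1` ((eA i `*` eB j) `*` eC k) =
    (eB j `*` eA i) `*` eC k.
  by apply/seteqP; split => -[[a b] c] [[? ?] ?].
by apply: measurableX; [apply: measurableX|]; exact: open_Borel_measurable.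
Qed.

Section pullback_eta.
Context {R : realType} {S G T : ptopologicalType}
  {HS : HaarGroupoid R S} {HG : HaarGroupoid R G} {HT : HaarGroupoid R T}
  {p : S -> G} {q : T -> G}
  {gp : G -> {measure set (BorelT S) -> \bar R} }
  {gq : G -> {measure set (BorelT T) -> \bar R} }.
Hypotheses (cp : continuous p) (cq : continuous q)
  (hgp : locally_finite_BSM (g0 HS) p (g0 HG) (fun y => gp y))
  (hgq : locally_finite_BSM (g0 HT) q (g0 HG) (fun y => gq y)).

Let eta := eta_measure HG gp gq.

Let fiberS y (_ : g0 HG y) : measurable ((g0 HS `&` p @^-1` [set y]) : set (BorelT S)) :=
  haar_fiber_measurable HS HG cp y.

Let fiberT y (_ : g0 HG y) : measurable ((g0 HT `&` q @^-1` [set y]) : set (BorelT T)) :=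
  haar_fiber_measurable HT HG cq y.

Let measurable_fun_gp_rng (U : set (BorelT S)) : measurable U ->
  measurable_fun setT (fun y : BorelT G => gp (rng HG y) U).
Proof.
apply: (measurable_fun_locally_finite_BSM_comp (haar_units_measurable HS)
  fiberS hgp (haar_units_measurable HG)).
- apply: continuous_Borel_measurable; exact: haar_rng_continuous.
- exact: haar_rng_unit.
Qed.

Let measurable_fun_gq_src (U : set (BorelT T)) : measurable U ->
  measurable_fun setT (fun y : BorelT G => gq (src HG y) U).
Proof.
apply: (measurable_fun_locally_finite_BSM_comp (haar_units_measurable HT)
  fiberT hgq (haar_units_measurable HG)).
- apply: continuous_Borel_measurable; exact: haar_src_continuous.
- exact: haar_src_unit.
Qed.

Lemma measurable_fun_eta_inner (E : set (BorelT (S * G * T)%type)) : measurable E ->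
  measurable_fun setT (fun ys : (BorelT G * BorelT S)%type =>
    \int[gq (src HG ys.1)]_t (\1_E ((ys.2, ys.1, t) : (S * G * T)%type))%:E).
Proof.
move=> mE.
have [F [mF Fcover Ffin]] := locally_finite_BSM_cover (haar_units_measurable HT)
  fiberT hgq (haar_second_countable HT).
have ml (U : set (BorelT T)) : measurable U ->
    measurable_fun setT (fun ys : (BorelT G * BorelT S)%type => gq (src HG ys.1) U).
  by move=> mU; exact: measurableT_comp (measurable_fun_gq_src _ mU) measurable_fst.
apply: (measurable_fun_integral_family ml mF Fcover _
  (fun z => (\1_E ((z.1.2, z.1.1, z.2) : (S * G * T)%type))%:E)).
- by move=> ys n; exact: Ffin (haar_src_unit HG _).
- by move=> z; rewrite lee_fin.
- apply/measurable_EFinP; apply: measurableT_comp (measurable_indic mE) _.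
  exact: measurable_fun_swap12_Borel (haar_second_countable HS)
    (haar_second_countable HG) (haar_second_countable HT).
Qed.

Lemma eta_measure_is_measure y : exists m : {measure set (BorelT (S * G * T)%type) -> \bar R},
  forall E, measurable E -> m E = eta y E.
Proof.
apply: prod_dirac_is_measure => E mE.
by have := measurable_fun_pair2 (y : BorelT G) (measurable_fun_eta_inner _ mE).
Qed.

Lemma eta_measure_concentrated y :
  eta y (~` (pullback_units HS HG HT p q `&` (fun z => z.1.2) @^-1` [set y])) = 0.
Proof.
case: (hgp) => _ concS _ _; case: (hgq) => _ concT _ _.
apply: (prod_dirac_not_setX _ _ _ (g0 HS `&` p @^-1` [set rng HG y])
  (g0 HT `&` q @^-1` [set src HG y])).
- exact: haar_fiber_measurable.
- exact: haar_fiber_measurable.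
- by apply: concS; exact: haar_rng_unit.
- by apply: concT; exact: haar_src_unit.
move=> s t /=; split => [nPst [[S0s ps] [T0t qt]]|nBC [[/= S0s T0t ps qt] _]].
  by apply: nPst; split.
exact: nBC.
Qed.

Lemma eta_measure_measurable (E : set (BorelT (S * G * T)%type)) : measurable E ->
  measurable_fun (setT : set (BorelT G)) (fun y => eta y E).
Proof.
move=> mE.
have [F [mF Fcover Ffin]] := locally_finite_BSM_cover (haar_units_measurable HS)
  fiberS hgp (haar_second_countable HS).
apply: (measurable_fun_integral_family (l := fun y : BorelT G => gp (rng HG y))
  measurable_fun_gp_rng mF Fcover _ (fun ys => \int[gq (src HG ys.1)]_t
    (\1_E ((ys.2, ys.1, t) : (S * G * T)%type))%:E)).
- by move=> y n; exact: Ffin (haar_rng_unit HG _).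
- by move=> ys; apply: integral_ge0 => t _; rewrite lee_fin.
- exact: measurable_fun_eta_inner.
Qed.

Lemma eta_measure_locally_finite z : pullback_units HS HG HT p q z ->
  exists U : set (S * G * T), [/\ open U, U z & forall y, eta y U < +oo].
Proof.
move: z => [[s g] t] [/= S0s T0t _ _].
case: hgp => _ _ _ /(_ s S0s) [US [oUS USs USfin]].
case: hgq => _ _ _ /(_ t T0t) [UT [oUT UTt UTfin]].
exists ((US `*` setT) `*` UT); split => // [|y].
  by apply: open_setX => //; apply: open_setX => //; exact: openT.
rewrite /eta eta_measure_prod_dirac prod_dirac_setX ?indicT ?mul1e; last 2 first.
- exact: open_Borel_measurable.
- exact: open_Borel_measurable.
apply: lte_mul_pinfty => //; last exact: UTfin (haar_src_unit HG _).
by rewrite ge0_fin_numE //; exact: USfin (haar_rng_unit HG _).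
Qed.

End pullback_eta.

Theorem proposition5p3 (R : realType) (S G T : ptopologicalType)
  (HS : HaarGroupoid R S) (HG : HaarGroupoid R G) (HT : HaarGroupoid R T)
  (p : S -> G) (q : T -> G)
  (hp : is_haar_hom HS HG p) (hq : is_haar_hom HT HG q)
  (gp : G -> {measure set (BorelT S) -> \bar R})
  (gq : G -> {measure set (BorelT T) -> \bar R})
  (hgp : locally_finite_BSM (g0 HS) p (g0 HG) (fun y => gp y))
  (hgq : locally_finite_BSM (g0 HT) q (g0 HG) (fun y => gq y))
  (dgp : is_disintegration (g0 HS) (g0 HG) (fun y => gp y) (hmu0 HS) (hmu0 HG))
  (dgq : is_disintegration (g0 HT) (g0 HG) (fun y => gq y) (hmu0 HT) (hmu0 HG)) :
  locally_finite_BSM (pullback_units HS HG HT p q) (fun z : S * G * T => z.1.2) setT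
    (eta_measure HG gp gq).
Proof.
have cp : continuous p by case: hp.
have cq : continuous q by case: hq.
split.
- by move=> y _; exact: (eta_measure_is_measure (HS := HS) cq hgq).
- by move=> y _; exact: eta_measure_concentrated cp cq hgp hgq y.
- by move=> E mE _; exact: eta_measure_measurable cp cq hgp hgq E mE.
- move=> z /(eta_measure_locally_finite hgp hgq) [U [oU Uz Ufin]].
  by exists U; split => // y _.
Qed.
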